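(* Let $0<q<1$ and let $l$ be a non-negative integer. Then \[ q^{2}(1+q)^{2}[l+1]_{q^{2}}+q^{2l+4}+[l+1]_{q^{2}}!\sum_{n=1}^{\infty}\frac{(1/2|q^{2})_{n}^{2}}{[n+1]_{q^{2}}!\,[l+n+1]_{q^{2}}!}\,q^{2(l+2)(n+1)} =\frac{(1+q)^{2}\,([l+1]_{q^{2}}!)^{2}}{\pi_{q}\,(1/2|q^{2})_{l+1}^{2}}\,q^{9/4}. \]
   Context: Let $0<q<1$ and write $q^{x}=e^{x\log q}$. $[z]_{q^2}=\frac{1-q^{2z}}{1-q^2}$; $[0]_{q^2}!=1$, $[n]_{q^2}!=\prod_{k=1}^n[k]_{q^2}$; $(1/2|q^2)_n=\prod_{k=0}^{n-1}[1/2+k]_{q^2}$ (empty product $=1$). With $(z;q)_\infty=\prod_{k\ge0}(1-zq^k)$, $\pi_q=(1-q^2)q^{1/4}\frac{(q^2;q^2)_\infty^2}{(q;q^2)_\infty^2}$. *)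

From Stdlib Require Import Reals Lra Lia ClassicalEpsilon.
Open Scope R_scope.

(* Limit of a real sequence (0 if it does not converge). *)
Definition lim_seq (u : nat -> R) : R :=
  match excluded_middle_informative (exists l, Un_cv u l) with
  | left H => proj1_sig (constructive_indefinite_description _ H)
  | right _ => 0
  end.

Fixpoint prod_upto (f : nat -> R) (n : nat) : R :=
  match n with
  | O => 1
  | S m => prod_upto f m * f m
  end.

Definition qpow (q x : R) : R := Rpower q x.

Definition qbr (q z : R) : R := (1 - qpow q (2 * z)) / (1 - q ^ 2).

Definition qfact (q : R) (n : nat) : R :=
  prod_upto (fun k => qbr q (INR (S k))) n.

Definition qhalf (q : R) (n : nat) : R :=
  prod_upto (fun k => qbr q (1/2 + INR k)) n.

Definition qpoch_inf (z p : R) : R :=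
  lim_seq (fun N => prod_upto (fun k => 1 - z * p ^ k) N).

Definition pi_q (q : R) : R :=
  (1 - q ^ 2) * qpow q (1/4) * (qpoch_inf (q ^ 2) (q ^ 2)) ^ 2
    / (qpoch_inf q (q ^ 2)) ^ 2.

Definition series_term (q : R) (l n : nat) : R :=
  (qhalf q n) ^ 2 / (qfact q (n + 1) * qfact q (l + n + 1))
    * q ^ (2 * (l + 2) * (n + 1)).

From Stdlib Require Import Reals Lra Lia Psatz ClassicalEpsilon.
From Coquelicot Require Import Coquelicot.
Open Scope R_scope.

(* Let U(l) be the left-hand side, with q^(2l+4) read as the term n = 0 of the
   series, and write [k] := (1 - q^k) / (1 - q^2).  A contiguity relation between
   the terms with parameters (l, n), (l+1, n) and (l, n+1) makes the partial sums
   of [2l+3]^2 U(l+1) - [2l+4]^2 U(l) telescope to a multiple of a single term,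
   which tends to 0.  Hence U(l) (1/2|q^2)_{l+1}^2 / ([l+1]_{q^2}!)^2 does not
   depend on l.  As l -> oo the series part of U(l) vanishes, the polynomial part
   tends to q^2 (1+q)^2 / (1 - q^2), and (1/2|q^2)_{l+1} / [l+1]_{q^2}! tends to
   (q;q^2)_oo / (q^2;q^2)_oo, a quotient of two positive infinite products; this
   value of the constant is the right-hand side. *)

Lemma lim_seq_of_is_lim_seq (v : nat -> R) (L : R) :
  is_lim_seq v L -> lim_seq v = L.
Proof.
  intro HL. apply is_lim_seq_Reals in HL. unfold lim_seq.
  destruct (excluded_middle_informative _) as [Hex | Hnot].
  - destruct (constructive_indefinite_description _ Hex) as [L' HL']; simpl.
    exact (UL_sequence v L' L HL' HL).
  - exfalso. apply Hnot. exists L. exact HL.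
Qed.

Lemma is_lim_seq_unique_R (v : nat -> R) (a b : R) :
  is_lim_seq v a -> is_lim_seq v b -> a = b.
Proof.
  intros Ha Hb. apply is_lim_seq_unique in Ha. apply is_lim_seq_unique in Hb.
  rewrite Ha in Hb. now injection Hb.
Qed.

Lemma stationary_is_lim_seq (v : nat -> R) (L : R) :
  (forall n, v (S n) = v n) -> is_lim_seq v L -> forall n, v n = L.
Proof.
  intros Hstat HL n.
  assert (Hconst : forall m, v m = v 0%nat).
  { intro m. induction m as [|m IH]; [reflexivity | now rewrite Hstat]. }
  rewrite Hconst. apply (is_lim_seq_unique_R v); [| exact HL].
  apply (is_lim_seq_ext (fun _ => v 0%nat)); [| apply is_lim_seq_const].
  intro m. symmetry. apply Hconst.
Qed.

Lemma is_lim_seq_scal_l_R (u : nat -> R) (a l : R) :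
  is_lim_seq u l -> is_lim_seq (fun n => a * u n) (a * l).
Proof. exact (is_lim_seq_scal_l u a l). Qed.

Lemma is_lim_seq_sum_Series (a : nat -> R) :
  ex_series a -> is_lim_seq (sum_f_R0 a) (Series a).
Proof.
  intro Ha. apply is_lim_seq_Reals, is_series_Reals, Series_correct, Ha.
Qed.

Lemma exp_le_one_minus (x b : R) :
  0 <= x <= b -> b < 1 -> exp (- (x / (1 - b))) <= 1 - x.
Proof.
  intros Hx Hb. set (y := x / (1 - b)).
  assert (Hprod : 1 <= (1 - x) * (1 + y)).
  { unfold y. replace ((1 - x) * (1 + x / (1 - b))) with (1 + x * (b - x) / (1 - b))
      by (field; lra).
    assert (0 <= x * (b - x) / (1 - b)) by (apply Rle_mult_inv_pos; nra). lra. }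
  rewrite exp_Ropp, <- (Rmult_1_l (/ exp y)). apply Rle_div_l; [apply exp_pos |].
  pose proof (exp_ineq1_le y). nra.
Qed.

Definition qpoch_part (z p : R) (n : nat) : R := prod_upto (fun k => 1 - z * p ^ k) n.

Section InfiniteProduct.

Variables z p : R.
Hypotheses (hz : 0 <= z < 1) (hp : 0 <= p < 1).

Lemma qpoch_factor_bounds k : 0 <= z * p ^ k <= z.
Proof.
  assert (0 <= p ^ k <= 1).
  { split; [apply pow_le; lra |]. rewrite <- (pow1 k). apply pow_incr. lra. }
  split; nra.
Qed.

Lemma qpoch_part_pos n : 0 < qpoch_part z p n.
Proof.
  induction n as [|n IH]; unfold qpoch_part in *; simpl; [lra |].
  pose proof (qpoch_factor_bounds n). apply Rmult_lt_0_compat; lra.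
Qed.

Lemma qpoch_part_decr n : qpoch_part z p (S n) <= qpoch_part z p n.
Proof.
  unfold qpoch_part at 1. simpl. fold (qpoch_part z p n).
  pose proof (qpoch_part_pos n). pose proof (qpoch_factor_bounds n). nra.
Qed.

(* From 1 - x >= exp (-x / (1 - z)) for x = z p^k <= z; the exponent is the
   partial geometric sum of the z p^k. *)
Lemma qpoch_part_lb n :
  exp (- (z * (1 - p ^ n) / (1 - p) / (1 - z))) <= qpoch_part z p n.
Proof.
  induction n as [|n IH].
  - unfold qpoch_part; simpl. replace (z * (1 - 1) / (1 - p) / (1 - z)) with 0 by (field; lra).
    rewrite Ropp_0, exp_0. lra.
  - unfold qpoch_part. simpl. fold (qpoch_part z p n).
    replace (- (z * (1 - p * p ^ n) / (1 - p) / (1 - z)))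
      with (- (z * (1 - p ^ n) / (1 - p) / (1 - z)) + - (z * p ^ n / (1 - z)))
      by (field; lra).
    rewrite exp_plus. apply Rmult_le_compat; try (left; apply exp_pos); [exact IH |].
    apply exp_le_one_minus; [apply qpoch_factor_bounds | lra].
Qed.

Lemma is_lim_seq_qpoch_inf : is_lim_seq (qpoch_part z p) (qpoch_inf z p).
Proof.
  destruct (ex_finite_lim_seq_decr (qpoch_part z p) 0 qpoch_part_decr)
    as [L HL].
  { intro n. left. apply qpoch_part_pos. }
  unfold qpoch_inf. fold (qpoch_part z p).
  now rewrite (lim_seq_of_is_lim_seq _ L HL).
Qed.

Lemma qpoch_inf_pos : 0 < qpoch_inf z p.
Proof.
  set (c := exp (- (z / (1 - p) / (1 - z)))).
  assert (Hc : forall n, c <= qpoch_part z p n).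
  { intro n. eapply Rle_trans; [| apply qpoch_part_lb]. unfold c.
    assert (Hexp : - (z / (1 - p) / (1 - z)) <= - (z * (1 - p ^ n) / (1 - p) / (1 - z))).
    { apply Ropp_le_contravar. unfold Rdiv.
      apply Rmult_le_compat_r; [left; apply Rinv_0_lt_compat; lra |].
      apply Rmult_le_compat_r; [left; apply Rinv_0_lt_compat; lra |].
      pose proof (qpoch_factor_bounds n). nra. }
    destruct Hexp as [Hlt | ->]; [left; now apply exp_increasing | right; reflexivity]. }
  pose proof (is_lim_seq_le _ _ c _ Hc (is_lim_seq_const c) is_lim_seq_qpoch_inf)
    as Hle; simpl in Hle.
  assert (0 < c) by apply exp_pos. lra.
Qed.

End InfiniteProduct.

Section Identity.

Variable q : R.
Hypotheses (hq0 : 0 < q) (hq1 : q < 1).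

(* [qint k] is [k/2]_{q^2}; exponents stay natural numbers this way. *)
Definition qint (k : nat) : R := (1 - q ^ k) / (1 - q ^ 2).

Lemma pow_q_bounds k : (0 < k)%nat -> 0 < q ^ k < 1.
Proof.
  intro Hk. split; [now apply pow_lt |].
  exact (proj2 (pow_lt_1_compat q k ltac:(lra) Hk)).
Qed.

Lemma one_minus_q2_pos : 0 < 1 - q ^ 2.
Proof. pose proof (pow_q_bounds 2 ltac:(lia)). lra. Qed.

Lemma qbr_INR n : qbr q (INR n) = qint (2 * n).
Proof.
  unfold qbr, qpow, qint.
  replace (2 * INR n) with (INR (2 * n)) by (rewrite mult_INR; simpl; ring).
  now rewrite Rpower_pow.
Qed.

Lemma qbr_half_INR k : qbr q (1 / 2 + INR k) = qint (2 * k + 1).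
Proof.
  unfold qbr, qpow, qint.
  replace (2 * (1 / 2 + INR k)) with (INR (2 * k + 1))
    by (rewrite plus_INR, mult_INR; simpl; field).
  now rewrite Rpower_pow.
Qed.

Lemma qfact_S n : qfact q (S n) = qfact q n * qint (2 * S n).
Proof. unfold qfact. cbn [prod_upto]. now rewrite qbr_INR. Qed.

Lemma qhalf_S n : qhalf q (S n) = qhalf q n * qint (2 * n + 1).
Proof. unfold qhalf. cbn [prod_upto]. now rewrite qbr_half_INR. Qed.

Lemma qint_2 : qint 2 = 1.
Proof. pose proof one_minus_q2_pos. unfold qint, Rdiv. apply Rinv_r. lra. Qed.

Lemma qint_pos k : (0 < k)%nat -> 0 < qint k.
Proof.
  intro Hk. pose proof (pow_q_bounds k Hk). pose proof one_minus_q2_pos.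
  apply Rdiv_lt_0_compat; lra.
Qed.

Lemma qint_le_mono m n : (m <= n)%nat -> qint m <= qint n.
Proof.
  intro Hmn. pose proof one_minus_q2_pos. unfold qint, Rdiv.
  apply Rmult_le_compat_r; [left; now apply Rinv_0_lt_compat |].
  replace n with (m + (n - m))%nat by lia. rewrite pow_add.
  assert (0 <= q ^ (n - m) <= 1).
  { split; [apply pow_le; lra |]. rewrite <- (pow1 (n - m)). apply pow_incr. lra. }
  assert (0 <= q ^ m) by (apply pow_le; lra). nra.
Qed.

Lemma qint_le_inv k : qint k <= / (1 - q ^ 2).
Proof.
  pose proof one_minus_q2_pos. unfold qint, Rdiv.
  rewrite <- (Rmult_1_l (/ (1 - q ^ 2))) at 2.
  apply Rmult_le_compat_r; [left; now apply Rinv_0_lt_compat |].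
  assert (0 < q ^ k) by now apply pow_lt. lra.
Qed.

Lemma qfact_pos n : 0 < qfact q n.
Proof.
  induction n as [|n IH]; [unfold qfact; simpl; lra |].
  rewrite qfact_S. apply Rmult_lt_0_compat; [exact IH | apply qint_pos; lia].
Qed.

Lemma qfact_1 : qfact q 1 = 1.
Proof.
  rewrite qfact_S. change (2 * 1)%nat with 2%nat. rewrite qint_2.
  unfold qfact. simpl. ring.
Qed.

Lemma qhalf_pos n : 0 < qhalf q n.
Proof.
  induction n as [|n IH]; [unfold qhalf; simpl; lra |].
  rewrite qhalf_S. apply Rmult_lt_0_compat; [exact IH | apply qint_pos; lia].
Qed.

Lemma qfact_qpoch_part n : qfact q n * (1 - q ^ 2) ^ n = qpoch_part (q ^ 2) (q ^ 2) n.
Proof.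
  pose proof one_minus_q2_pos.
  induction n as [|n IH]; [unfold qfact, qpoch_part; simpl; ring |].
  rewrite qfact_S. unfold qpoch_part in *. cbn [prod_upto]. rewrite <- IH.
  unfold qint. replace (2 * S n)%nat with (2 + 2 * n)%nat by lia.
  rewrite pow_add, pow_mult. simpl pow. field. lra.
Qed.

Lemma qhalf_qpoch_part n : qhalf q n * (1 - q ^ 2) ^ n = qpoch_part q (q ^ 2) n.
Proof.
  pose proof one_minus_q2_pos.
  induction n as [|n IH]; [unfold qhalf, qpoch_part; simpl; ring |].
  rewrite qhalf_S. unfold qpoch_part in *. cbn [prod_upto]. rewrite <- IH.
  unfold qint. rewrite Nat.add_comm, pow_add, pow_mult. simpl pow. field. lra.
Qed.


Definition lhs_term (l n : nat) : R := qfact q (l + 1) * series_term q l n.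

Lemma lhs_term_pos l n : 0 < lhs_term l n.
Proof.
  pose proof (qfact_pos (l + 1)). pose proof (qfact_pos (n + 1)).
  pose proof (qfact_pos (l + n + 1)). pose proof (qhalf_pos n).
  assert (0 < q ^ (2 * (l + 2) * (n + 1))) by now apply pow_lt.
  unfold lhs_term, series_term.
  apply Rmult_lt_0_compat; [lra |]. apply Rmult_lt_0_compat; [| lra].
  apply Rdiv_lt_0_compat; [now apply pow_lt | now apply Rmult_lt_0_compat].
Qed.

Lemma lhs_term_0 l : lhs_term l 0 = q ^ (2 * l + 4).
Proof.
  unfold lhs_term, series_term, qhalf.
  replace (l + 0 + 1)%nat with (l + 1)%nat by lia.
  replace (2 * (l + 2) * (0 + 1))%nat with (2 * l + 4)%nat by lia.
  change (0 + 1)%nat with 1%nat. rewrite qfact_1.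
  pose proof (qfact_pos (l + 1)). simpl prod_upto. field. lra.
Qed.

Lemma lhs_term_Sl l n :
  lhs_term (S l) n
  = lhs_term l n * (qint (2 * l + 4) / qint (2 * l + 2 * n + 4)) * q ^ (2 * n + 2).
Proof.
  unfold lhs_term, series_term.
  replace (S l + 1)%nat with (S (l + 1)) by lia.
  replace (S l + n + 1)%nat with (S (l + n + 1)) by lia.
  replace (2 * (S l + 2) * (n + 1))%nat with (2 * (l + 2) * (n + 1) + (2 * n + 2))%nat by lia.
  rewrite !qfact_S, pow_add.
  replace (2 * S (l + 1))%nat with (2 * l + 4)%nat by lia.
  replace (2 * S (l + n + 1))%nat with (2 * l + 2 * n + 4)%nat by lia.
  pose proof (qfact_pos (n + 1)). pose proof (qfact_pos (l + n + 1)).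
  pose proof (qint_pos (2 * l + 2 * n + 4) ltac:(lia)).
  field. lra.
Qed.

Lemma lhs_term_Sn l n :
  lhs_term l (S n)
  = lhs_term l n * (qint (2 * n + 1) ^ 2 / (qint (2 * n + 4) * qint (2 * l + 2 * n + 4)))
    * q ^ (2 * l + 4).
Proof.
  unfold lhs_term, series_term.
  replace (2 * (l + 2) * (S n + 1))%nat with (2 * (l + 2) * (n + 1) + (2 * l + 4))%nat by lia.
  replace (S n + 1)%nat with (S (n + 1)) by lia.
  replace (l + S n + 1)%nat with (S (l + n + 1)) by lia.
  rewrite !qfact_S, qhalf_S, pow_add.
  replace (2 * S (n + 1))%nat with (2 * n + 4)%nat by lia.
  replace (2 * S (l + n + 1))%nat with (2 * l + 2 * n + 4)%nat by lia.
  pose proof (qfact_pos (n + 1)). pose proof (qfact_pos (l + n + 1)).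
  pose proof (qint_pos (2 * l + 2 * n + 4) ltac:(lia)).
  pose proof (qint_pos (2 * n + 4) ltac:(lia)).
  field. lra.
Qed.

Lemma lhs_term_S_le l n : lhs_term l (S n) <= q ^ 2 * lhs_term l n.
Proof.
  rewrite lhs_term_Sn.
  pose proof (qint_pos (2 * n + 1) ltac:(lia)).
  pose proof (qint_pos (2 * n + 4) ltac:(lia)).
  pose proof (qint_pos (2 * l + 2 * n + 4) ltac:(lia)).
  pose proof (qint_le_mono (2 * n + 1) (2 * n + 4) ltac:(lia)).
  pose proof (qint_le_mono (2 * n + 1) (2 * l + 2 * n + 4) ltac:(lia)).
  set (r := qint (2 * n + 1) ^ 2 / (qint (2 * n + 4) * qint (2 * l + 2 * n + 4))).
  assert (Hr : 0 <= r <= 1).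
  { unfold r. split; [apply Rle_mult_inv_pos; nra |].
    apply Rle_div_l; nra. }
  assert (Hpow : q ^ (2 * l + 4) <= q ^ 2).
  { replace (2 * l + 4)%nat with (2 + (2 * l + 2))%nat by lia. rewrite pow_add.
    pose proof (pow_q_bounds 2 ltac:(lia)). pose proof (pow_q_bounds (2 * l + 2) ltac:(lia)).
    nra. }
  pose proof (lhs_term_pos l n). pose proof (pow_q_bounds (2 * l + 4) ltac:(lia)).
  rewrite Rmult_assoc, (Rmult_comm (q ^ 2)). apply Rmult_le_compat_l; [lra |].
  rewrite <- (Rmult_1_l (q ^ 2)). apply Rmult_le_compat; lra.
Qed.

Lemma lhs_term_le l n : lhs_term l n <= q ^ (2 * l + 4) * (q ^ 2) ^ n.
Proof.
  induction n as [|n IH]; [rewrite lhs_term_0; simpl; lra |].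
  pose proof (pow_q_bounds 2 ltac:(lia)).
  eapply Rle_trans; [apply lhs_term_S_le |].
  replace (q ^ (2 * l + 4) * (q ^ 2) ^ S n) with (q ^ 2 * (q ^ (2 * l + 4) * (q ^ 2) ^ n))
    by (simpl; ring).
  apply Rmult_le_compat_l; [lra | exact IH].
Qed.

Lemma ex_series_lhs_term l : ex_series (lhs_term l).
Proof.
  pose proof (pow_q_bounds 2 ltac:(lia)).
  apply (@ex_series_le R_AbsRing R_CompleteNormedModule _
           (fun n => q ^ (2 * l + 4) * (q ^ 2) ^ n)).
  - intro n. change norm with Rabs. simpl.
    rewrite Rabs_pos_eq; [apply lhs_term_le | left; apply lhs_term_pos].
  - apply (ex_series_scal_l (q ^ (2 * l + 4)) (fun n => (q ^ 2) ^ n)).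
    apply ex_series_geom. rewrite Rabs_pos_eq; lra.
Qed.


Lemma lhs_term_contiguity l n :
  qint (2 * l + 3) ^ 2 * lhs_term (S l) n - qint (2 * l + 4) ^ 2 * lhs_term l n
  = qint (2 * l + 4) * (qint (2 * n + 4) * lhs_term l (S n) - qint (2 * n + 2) * lhs_term l n).
Proof.
  rewrite lhs_term_Sl, lhs_term_Sn. generalize (lhs_term l n) as U; intro U.
  pose proof one_minus_q2_pos.
  pose proof (pow_q_bounds (2 * n + 1) ltac:(lia)).
  pose proof (pow_q_bounds (2 * l + 3) ltac:(lia)).
  assert (0 < q ^ 3 < 1) by (apply pow_q_bounds; lia).
  unfold qint.
  replace (2 * l + 4)%nat with (2 * l + 3 + 1)%nat by lia.
  replace (2 * n + 2)%nat with (2 * n + 1 + 1)%nat by lia.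
  replace (2 * n + 4)%nat with (2 * n + 1 + 3)%nat by lia.
  replace (2 * l + 2 * n + 4)%nat with (2 * l + 3 + (2 * n + 1))%nat by lia.
  rewrite (pow_add q (2 * l + 3) 1), (pow_add q (2 * n + 1) 1), (pow_add q (2 * n + 1) 3),
    (pow_add q (2 * l + 3) (2 * n + 1)).
  generalize dependent (q ^ 3). generalize dependent (q ^ (2 * n + 1)).
  generalize dependent (q ^ (2 * l + 3)). intros Y HY X HX C HC.
  field. repeat split; nra.
Qed.

Lemma lhs_poly_contiguity l :
  qint (2 * l + 3) ^ 2 * (q ^ 2 * (1 + q) ^ 2 * qint (2 * (S l + 1)))
  - qint (2 * l + 4) ^ 2 * (q ^ 2 * (1 + q) ^ 2 * qint (2 * (l + 1)))
  = qint (2 * l + 4) * q ^ (2 * l + 4).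
Proof.
  pose proof one_minus_q2_pos. unfold qint.
  replace (2 * (S l + 1))%nat with (2 * l + 2 + 2)%nat by lia.
  replace (2 * l + 4)%nat with (2 * l + 2 + 2)%nat by lia.
  replace (2 * (l + 1))%nat with (2 * l + 2)%nat by lia.
  replace (2 * l + 3)%nat with (2 * l + 2 + 1)%nat by lia.
  rewrite !pow_add. field. lra.
Qed.


Definition lhs_poly (l : nat) : R := q ^ 2 * (1 + q) ^ 2 * qint (2 * (l + 1)).

Definition lhs_partial (l N : nat) : R := lhs_poly l + sum_f_R0 (lhs_term l) N.

Lemma lhs_partial_telescope l N :
  qint (2 * l + 3) ^ 2 * lhs_partial (S l) N - qint (2 * l + 4) ^ 2 * lhs_partial l N
  = qint (2 * l + 4) * qint (2 * N + 4) * lhs_term l (S N).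
Proof.
  unfold lhs_partial, lhs_poly. induction N as [|N IH].
  - pose proof (lhs_poly_contiguity l) as Hpoly.
    pose proof (lhs_term_contiguity l 0) as Hterm.
    change (2 * 0 + 2)%nat with 2%nat in Hterm. rewrite qint_2 in Hterm.
    rewrite <- lhs_term_0 in Hpoly. simpl sum_f_R0. lra.
  - pose proof (lhs_term_contiguity l (S N)) as Hterm.
    replace (2 * S N + 2)%nat with (2 * N + 4)%nat in Hterm by lia.
    cbn [sum_f_R0]. lra.
Qed.

Definition lhs_value (l : nat) : R := lhs_poly l + Series (lhs_term l).

Lemma is_lim_seq_lhs_partial l : is_lim_seq (lhs_partial l) (lhs_value l).
Proof.
  apply (is_lim_seq_plus' (fun _ => lhs_poly l)); [apply is_lim_seq_const |].
  apply is_lim_seq_sum_Series, ex_series_lhs_term.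
Qed.

Lemma lhs_value_contiguity l :
  qint (2 * l + 3) ^ 2 * lhs_value (S l) = qint (2 * l + 4) ^ 2 * lhs_value l.
Proof.
  set (W N := qint (2 * l + 3) ^ 2 * lhs_partial (S l) N
              - qint (2 * l + 4) ^ 2 * lhs_partial l N).
  assert (HW : is_lim_seq W
                 (qint (2 * l + 3) ^ 2 * lhs_value (S l) - qint (2 * l + 4) ^ 2 * lhs_value l)).
  { apply is_lim_seq_minus'; apply is_lim_seq_scal_l_R, is_lim_seq_lhs_partial. }
  assert (HW0 : is_lim_seq W 0).
  { set (c := qint (2 * l + 4) / (1 - q ^ 2)).
    apply (is_lim_seq_le_le (fun _ => 0) W (fun N => c * lhs_term l (S N))).
    - intro N. unfold W. rewrite lhs_partial_telescope.
      pose proof (qint_pos (2 * l + 4) ltac:(lia)).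
      pose proof (qint_pos (2 * N + 4) ltac:(lia)).
      pose proof (qint_le_inv (2 * N + 4)).
      pose proof (lhs_term_pos l (S N)).
      split; [apply Rmult_le_pos; [apply Rmult_le_pos |]; lra |].
      unfold c, Rdiv. apply Rmult_le_compat_r; [lra |].
      apply Rmult_le_compat_l; lra.
    - apply is_lim_seq_const.
    - replace (Finite 0) with (Finite (c * 0)) by (f_equal; ring).
      apply is_lim_seq_scal_l_R, (is_lim_seq_incr_1 (lhs_term l)).
      apply ex_series_lim_0, ex_series_lhs_term. }
  pose proof (is_lim_seq_unique_R W _ _ HW HW0). lra.
Qed.

Lemma is_lim_seq_q2_pow : is_lim_seq (fun n => (q ^ 2) ^ n) 0.
Proof.
  apply is_lim_seq_geom. pose proof (pow_q_bounds 2 ltac:(lia)).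
  rewrite Rabs_pos_eq; lra.
Qed.

Lemma Series_lhs_term_bounds l :
  0 <= Series (lhs_term l) <= q ^ (2 * l + 4) / (1 - q ^ 2).
Proof.
  pose proof (pow_q_bounds 2 ltac:(lia)).
  assert (Hgeom : Rabs (q ^ 2) < 1) by (rewrite Rabs_pos_eq; lra).
  split.
  - apply (is_lim_seq_le (fun _ => 0) (sum_f_R0 (lhs_term l)) 0 (Series (lhs_term l))).
    + intro N. apply cond_pos_sum. intro n. left. apply lhs_term_pos.
    + apply is_lim_seq_const.
    + apply is_lim_seq_sum_Series, ex_series_lhs_term.
  - replace (q ^ (2 * l + 4) / (1 - q ^ 2))
      with (Series (fun n => q ^ (2 * l + 4) * (q ^ 2) ^ n))
      by (rewrite Series_scal_l, Series_geom by exact Hgeom; reflexivity).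
    apply Series_le.
    + intro n. split; [left; apply lhs_term_pos | apply lhs_term_le].
    + apply (ex_series_scal_l (q ^ (2 * l + 4)) (fun n => (q ^ 2) ^ n)).
      now apply ex_series_geom.
Qed.

Lemma is_lim_seq_lhs_value :
  is_lim_seq lhs_value (q ^ 2 * (1 + q) ^ 2 / (1 - q ^ 2)).
Proof.
  pose proof one_minus_q2_pos.
  set (K := q ^ 2 * (1 + q) ^ 2 / (1 - q ^ 2)).
  replace (Finite K) with (Finite ((K - K * q ^ 2 * 0) + 0)) by (f_equal; ring).
  apply is_lim_seq_plus'.
  - apply (is_lim_seq_ext (fun l => K - K * q ^ 2 * (q ^ 2) ^ l)).
    + intro l. unfold lhs_poly, qint, K.
      replace (2 * (l + 1))%nat with (2 + 2 * l)%nat by lia.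
      rewrite pow_add, pow_mult. field. lra.
    + apply (is_lim_seq_minus' (fun _ => K)); [apply is_lim_seq_const |].
      apply is_lim_seq_scal_l_R, is_lim_seq_q2_pow.
  - apply (is_lim_seq_le_le (fun _ => 0) _ (fun l => q ^ 4 / (1 - q ^ 2) * (q ^ 2) ^ l)).
    + intro l. replace (q ^ 4 / (1 - q ^ 2) * (q ^ 2) ^ l) with (q ^ (2 * l + 4) / (1 - q ^ 2)).
      * apply Series_lhs_term_bounds.
      * rewrite pow_add, pow_mult. field. lra.
    + apply is_lim_seq_const.
    + replace (Finite 0) with (Finite (q ^ 4 / (1 - q ^ 2) * 0)) by (f_equal; ring).
      apply is_lim_seq_scal_l_R, is_lim_seq_q2_pow.
Qed.

Definition lhs_normalized (l : nat) : R :=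
  lhs_value l * qhalf q (l + 1) ^ 2 / qfact q (l + 1) ^ 2.

Lemma lhs_normalized_S l : lhs_normalized (S l) = lhs_normalized l.
Proof.
  unfold lhs_normalized. replace (S l + 1)%nat with (S (l + 1)) by lia.
  rewrite qfact_S, qhalf_S.
  replace (2 * (l + 1) + 1)%nat with (2 * l + 3)%nat by lia.
  replace (2 * S (l + 1))%nat with (2 * l + 4)%nat by lia.
  pose proof (lhs_value_contiguity l) as Hrec.
  pose proof (qint_pos (2 * l + 3) ltac:(lia)).
  pose proof (qint_pos (2 * l + 4) ltac:(lia)).
  pose proof (qfact_pos (l + 1)).
  replace (lhs_value (S l)) with (qint (2 * l + 4) ^ 2 * lhs_value l / qint (2 * l + 3) ^ 2)
    by (rewrite <- Hrec; field; lra).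
  field. lra.
Qed.

Lemma is_lim_seq_lhs_normalized :
  is_lim_seq lhs_normalized
    (q ^ 2 * (1 + q) ^ 2 / (1 - q ^ 2)
     * (qpoch_inf q (q ^ 2) / qpoch_inf (q ^ 2) (q ^ 2)) ^ 2).
Proof.
  pose proof one_minus_q2_pos.
  pose proof (pow_q_bounds 2 ltac:(lia)).
  set (Q := qpoch_inf q (q ^ 2)). set (P := qpoch_inf (q ^ 2) (q ^ 2)).
  set (ratio N := qpoch_part q (q ^ 2) N / qpoch_part (q ^ 2) (q ^ 2) N).
  assert (HP : 0 < P) by (apply qpoch_inf_pos; lra).
  assert (Hratio : is_lim_seq (fun l => ratio (S l)) (Q / P)).
  { apply (is_lim_seq_incr_1 ratio).
    apply is_lim_seq_div'; [| | lra]; apply is_lim_seq_qpoch_inf; lra. }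
  apply (is_lim_seq_ext (fun l => lhs_value l * (ratio (S l) * ratio (S l)))).
  - intro l. unfold lhs_normalized, ratio. replace (l + 1)%nat with (S l) by lia.
    rewrite <- qhalf_qpoch_part, <- qfact_qpoch_part.
    pose proof (qfact_pos (S l)).
    assert (0 < (1 - q ^ 2) ^ S l) by now apply pow_lt.
    field. lra.
  - replace ((Q / P) ^ 2) with (Q / P * (Q / P)) by ring.
    apply is_lim_seq_mult'; [apply is_lim_seq_lhs_value |].
    apply is_lim_seq_mult'; exact Hratio.
Qed.

Lemma qpow_9_4 : qpow q (9 / 4) = q ^ 2 * qpow q (1 / 4).
Proof.
  unfold qpow. replace (9 / 4) with (INR 2 + 1 / 4) by (simpl; field).
  now rewrite Rpower_plus, Rpower_pow.
Qed.

Lemma lhs_value_closed_form l :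
  lhs_value l
  = (1 + q) ^ 2 * qfact q (l + 1) ^ 2 / (pi_q q * qhalf q (l + 1) ^ 2) * qpow q (9 / 4).
Proof.
  pose proof one_minus_q2_pos.
  pose proof (pow_q_bounds 2 ltac:(lia)).
  assert (HQ : 0 < qpoch_inf q (q ^ 2)) by (apply qpoch_inf_pos; lra).
  assert (HP : 0 < qpoch_inf (q ^ 2) (q ^ 2)) by (apply qpoch_inf_pos; lra).
  assert (Hq4 : 0 < qpow q (1 / 4)) by apply exp_pos.
  pose proof (qhalf_pos (l + 1)). pose proof (qfact_pos (l + 1)).
  pose proof (stationary_is_lim_seq _ _ lhs_normalized_S is_lim_seq_lhs_normalized l)
    as Hl.
  unfold lhs_normalized in Hl.
  rewrite qpow_9_4. unfold pi_q.
  replace (lhs_value l)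
    with (lhs_value l * qhalf q (l + 1) ^ 2 / qfact q (l + 1) ^ 2
          * qfact q (l + 1) ^ 2 / qhalf q (l + 1) ^ 2) by (field; lra).
  rewrite Hl. field. repeat split; lra.
Qed.

Lemma lhs_partial_S l N :
  lhs_partial l (S N)
  = q ^ 2 * (1 + q) ^ 2 * qbr q (INR (l + 1)) + q ^ (2 * l + 4)
    + qfact q (l + 1) * sum_f_R0 (fun k => series_term q l (S k)) N.
Proof.
  unfold lhs_partial, lhs_poly. rewrite decomp_sum by lia.
  simpl pred. rewrite lhs_term_0, qbr_INR, scal_sum. unfold lhs_term.
  rewrite Rplus_assoc. f_equal. f_equal. apply sum_eq. intros k _. ring.
Qed.

End Identity.

Theorem mainTheorem7 (q : R) (l : nat) (hq0 : 0 < q) (hq1 : q < 1) :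
  Un_cv
    (fun N =>
       q ^ 2 * (1 + q) ^ 2 * qbr q (INR (l + 1)) + q ^ (2 * l + 4)
       + qfact q (l + 1) * sum_f_R0 (fun k => series_term q l (S k)) N)
    ((1 + q) ^ 2 * (qfact q (l + 1)) ^ 2
       / (pi_q q * (qhalf q (l + 1)) ^ 2) * qpow q (9/4)).
Proof.
  rewrite <- (lhs_value_closed_form q hq0 hq1 l). apply is_lim_seq_Reals.
  apply (is_lim_seq_ext (fun N => lhs_partial q l (S N))).
  - intro N. now apply lhs_partial_S.
  - apply (is_lim_seq_incr_1 (lhs_partial q l)), is_lim_seq_lhs_partial; assumption.
Qed.
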